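(* For a rectangular element $K=[x_1,x_2]\times[y_1,y_2]$ of a regular rectangular partition $T_h$, with vertices $P_1=(x_1,y_1)$, $P_2=(x_2,y_1)$, $P_3=(x_2,y_2)$, $P_4=(x_1,y_2)$, and for $w_h\in U_h$ with $w_i=w_h(P_i)$, define $$|w_h|_{1,h,K}^2=(w_2-w_1)^2+(w_3-w_2)^2+(w_3-w_4)^2+(w_4-w_1)^2,\qquad |w_h|_{1,h}=\Big(\sum_{K\in T_h}|w_h|_{1,h,K}^2\Big)^{1/2}.$$ Then for every $K\in T_h$ and every $w_h\in U_h$, $$\frac{1}{6\gamma}|w_h|_{1,h,K}^2\le|w_h|_{1,K}^2\le\frac{\gamma}{2}|w_h|_{1,h,K}^2;$$ in particular $|\cdot|_{1,h}$ is equivalent to $|\cdot|_1$ on $U_h$.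
   Context: $\Omega\subset\mathbb{R}^2$ is an open rectangle. $T_h$ is a conforming partition of $\overline\Omega$ into closed rectangles with sides parallel to the axes; $h_K$ is the diameter of $K$, $\rho_K$ the diameter of the largest ball contained in $K$, and regularity means $h_K/\rho_K\le\gamma$ for all $K\in T_h$. $U_h=\{v\in C^0(\overline\Omega): v|_K\in Q_1(K)\ \forall K,\ v|_{\partial\Omega}=0\}$ ($Q_1$ = bilinear polynomials). $|w|_{1,K}^2=\int_K|\nabla w|^2$ and $|w|_1^2=\int_\Omega|\nabla w|^2$. *)

From Stdlib Require Import Reals List.
From Coquelicot Require Import Coquelicot.
Open Scope R_scope.

Record rect := Rect { rx1 : R; rx2 : R; ry1 : R; ry2 : R }.

Definition rect_ok (K : rect) : Prop := rx1 K < rx2 K /\ ry1 K < ry2 K.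

Definition in_rect (K : rect) (x y : R) : Prop :=
  rx1 K <= x <= rx2 K /\ ry1 K <= y <= ry2 K.

Definition on_bdry (K : rect) (x y : R) : Prop :=
  in_rect K x y /\ (x = rx1 K \/ x = rx2 K \/ y = ry1 K \/ y = ry2 K).

Definition P1 K : R * R := (rx1 K, ry1 K).
Definition P2 K : R * R := (rx2 K, ry1 K).
Definition P3 K : R * R := (rx2 K, ry2 K).
Definition P4 K : R * R := (rx1 K, ry2 K).
Definition vertices K : list (R * R) := P1 K :: P2 K :: P3 K :: P4 K :: nil.
Definition edges K : list ((R * R) * (R * R)) :=
  (P1 K, P2 K) :: (P2 K, P3 K) :: (P3 K, P4 K) :: (P4 K, P1 K) :: nil.

Definition on_seg (e : (R * R) * (R * R)) (z : R * R) : Prop :=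
  exists t, 0 <= t <= 1 /\
    fst z = fst (fst e) + t * (fst (snd e) - fst (fst e)) /\
    snd z = snd (fst e) + t * (snd (snd e) - snd (fst e)).

(* diameter of K and diameter of the largest ball (disc) contained in K *)
Definition h_K (K : rect) : R := sqrt ((rx2 K - rx1 K) ^ 2 + (ry2 K - ry1 K) ^ 2).
Definition rho_K (K : rect) : R := Rmin (rx2 K - rx1 K) (ry2 K - ry1 K).

Definition conforming_partition (Om : rect) (T : list rect) : Prop :=
  NoDup T /\
  (forall K, In K T -> rect_ok K /\
     forall x y, in_rect K x y -> in_rect Om x y) /\
  (forall x y, in_rect Om x y -> exists K, In K T /\ in_rect K x y) /\
  (forall K1 K2, In K1 T -> In K2 T -> K1 <> K2 ->
     (forall x y, ~ (in_rect K1 x y /\ in_rect K2 x y)) \/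
     (exists v, In v (vertices K1) /\ In v (vertices K2) /\
        forall x y, (in_rect K1 x y /\ in_rect K2 x y) <-> (x, y) = v) \/
     (exists e1 e2, In e1 (edges K1) /\ In e2 (edges K2) /\
        (forall z, on_seg e1 z <-> on_seg e2 z) /\
        forall x y, (in_rect K1 x y /\ in_rect K2 x y) <-> on_seg e1 (x, y))).

Definition regular (gamma : R) (T : list rect) : Prop :=
  forall K, In K T -> h_K K / rho_K K <= gamma.

Record Q1 := MkQ1 { q0 : R; qx : R; qy : R; qxy : R }.
Definition q1 (p : Q1) (x y : R) : R := q0 p + qx p * x + qy p * y + qxy p * x * y.

Definition in_Uh (Om : rect) (T : list rect) (w : R -> R -> R) : Prop :=
  (forall x y, in_rect Om x y -> forall eps, 0 < eps -> exists delta, 0 < delta /\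
     forall x' y', in_rect Om x' y' -> Rabs (x' - x) < delta -> Rabs (y' - y) < delta ->
       Rabs (w x' y' - w x y) < eps) /\
  (forall K, In K T -> exists p : Q1, forall x y, in_rect K x y -> w x y = q1 p x y) /\
  (forall x y, on_bdry Om x y -> w x y = 0).

(* |v|_{1,K}^2 = \int_K |grad v|^2, for a smooth function v (used with v the
   Q1 polynomial representing w_h on K) *)
Definition semi1K (K : rect) (v : R -> R -> R) : R :=
  RInt (fun x => RInt (fun y =>
          (Derive (fun t => v t y) x) ^ 2 + (Derive (fun t => v x t) y) ^ 2)
        (ry1 K) (ry2 K)) (rx1 K) (rx2 K).

Definition wv (w : R -> R -> R) (P : R * R) : R := w (fst P) (snd P).
Definition semi1hK (K : rect) (w : R -> R -> R) : R :=
  (wv w (P2 K) - wv w (P1 K)) ^ 2 + (wv w (P3 K) - wv w (P2 K)) ^ 2 +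
  (wv w (P3 K) - wv w (P4 K)) ^ 2 + (wv w (P4 K) - wv w (P1 K)) ^ 2.

Definition sumT (T : list rect) (f : rect -> R) : R := fold_right Rplus 0 (map f T).

(* On [K] a bilinear [p] has [d_x p] affine in [y] and [d_y p] affine in [x],
   so both seminorms are explicit in the side lengths [a, b], the values
   [alpha, beta] of [d_x p] on the bottom and top edges and the values
   [gamma', delta] of [d_y p] on the left and right edges:
   [|p|_{1,K}^2 = a b (sq_mean alpha beta + sq_mean gamma' delta)] and
   [|p|_{1,h,K}^2 = a^2 (alpha^2 + beta^2) + b^2 (gamma'^2 + delta^2)].
   As [sq_mean s t] lies between [(s^2 + t^2) / 6] and [(s^2 + t^2) / 2], and
   regularity gives [a <= gamma b] and [b <= gamma a], the bounds follow. *)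
From Stdlib Require Import Reals List Lra Psatz.
From Coquelicot Require Import Coquelicot.
Open Scope R_scope.

Definition dx_q1 (p : Q1) (y : R) : R := qx p + qxy p * y.
Definition dy_q1 (p : Q1) (x : R) : R := qy p + qxy p * x.

(* Mean value of the square of an affine function taking the values [s] and [t]
   at the endpoints of an interval. *)
Definition sq_mean (s t : R) : R := (s ^ 2 + s * t + t ^ 2) / 3.

Lemma Derive_q1_x (p : Q1) (x y : R) : Derive (fun t => q1 p t y) x = dx_q1 p y.
Proof. apply is_derive_unique; unfold q1, dx_q1; auto_derive; trivial; ring. Qed.

Lemma Derive_q1_y (p : Q1) (x y : R) : Derive (fun t => q1 p x t) y = dy_q1 p x.
Proof. apply is_derive_unique; unfold q1, dy_q1; auto_derive; trivial; ring. Qed.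

Lemma is_RInt_sqr_affine (c0 c1 d u v : R) :
  is_RInt (fun t => (c0 + c1 * t) ^ 2 + d) u v
    ((v - u) * (sq_mean (c0 + c1 * u) (c0 + c1 * v) + d)).
Proof.
  set (F t := c0 ^ 2 * t + c0 * c1 * t ^ 2 + c1 ^ 2 * t ^ 3 / 3 + d * t).
  replace ((v - u) * _) with (F v - F u) by (unfold F, sq_mean; field).
  apply (is_RInt_derive F).
  - intros t _; unfold F; auto_derive; trivial; field.
  - intros t _; apply (@ex_derive_continuous R_AbsRing R_NormedModule); auto_derive; trivial.
Qed.

Lemma semi1K_q1 (K : rect) (p : Q1) :
  semi1K K (q1 p) =
  (rx2 K - rx1 K) * (ry2 K - ry1 K) *
  (sq_mean (dx_q1 p (ry1 K)) (dx_q1 p (ry2 K)) +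
   sq_mean (dy_q1 p (rx1 K)) (dy_q1 p (rx2 K))).
Proof.
  set (Mx := sq_mean (dx_q1 p (ry1 K)) (dx_q1 p (ry2 K))).
  assert (inner : forall x,
    RInt (fun y => Derive (fun t => q1 p t y) x ^ 2 + Derive (fun t => q1 p x t) y ^ 2)
      (ry1 K) (ry2 K) = scal (ry2 K - ry1 K) ((qy p + qxy p * x) ^ 2 + Mx)).
  { intros x; apply is_RInt_unique.
    apply (is_RInt_ext (fun y => (qx p + qxy p * y) ^ 2 + dy_q1 p x ^ 2)).
    { intros y _; rewrite Derive_q1_x, Derive_q1_y; reflexivity. }
    replace (scal _ _) with ((ry2 K - ry1 K) * (Mx + dy_q1 p x ^ 2))
      by (unfold scal; simpl; unfold mult; simpl; unfold dy_q1; ring).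
    exact (is_RInt_sqr_affine (qx p) (qxy p) _ _ _). }
  unfold semi1K; rewrite (RInt_ext _ _ _ _ (fun x _ => inner x)).
  rewrite (is_RInt_unique _ _ _ _ (is_RInt_scal _ _ _ _ _ (is_RInt_sqr_affine _ _ Mx _ _))).
  unfold scal; simpl; unfold mult; simpl; unfold dy_q1; ring.
Qed.

Lemma semi1hK_q1 (K : rect) (p : Q1) (w : R -> R -> R) :
  rect_ok K -> (forall x y, in_rect K x y -> w x y = q1 p x y) ->
  semi1hK K w =
  (rx2 K - rx1 K) ^ 2 * (dx_q1 p (ry1 K) ^ 2 + dx_q1 p (ry2 K) ^ 2) +
  (ry2 K - ry1 K) ^ 2 * (dy_q1 p (rx1 K) ^ 2 + dy_q1 p (rx2 K) ^ 2).
Proof.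
  intros [Hx Hy] Hw; unfold semi1hK, wv, P1, P2, P3, P4; simpl.
  rewrite !Hw by (unfold in_rect; lra); unfold q1, dx_q1, dy_q1; ring.
Qed.

Lemma sq_mean_bounds (s t : R) :
  (s ^ 2 + t ^ 2) / 6 <= sq_mean s t <= (s ^ 2 + t ^ 2) / 2.
Proof.
  unfold sq_mean; pose proof (pow2_ge_0 (s + t)); pose proof (pow2_ge_0 (s - t)).
  split; lra.
Qed.

(* One of the two directions: [a] is the side along which the derivative is
   taken, [b] the other side. *)
Lemma edge_energy_bounds (g a b s t : R) :
  0 < a -> 0 < b -> a <= g * b -> b <= g * a ->
  / (6 * g) * (a ^ 2 * (s ^ 2 + t ^ 2)) <= a * b * sq_mean s t /\
  a * b * sq_mean s t <= g / 2 * (a ^ 2 * (s ^ 2 + t ^ 2)).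
Proof.
  intros Ha Hb Hab Hba.
  assert (Hg : 0 < g) by nra.
  assert (Hst : 0 <= s ^ 2 + t ^ 2) by nra.
  destruct (sq_mean_bounds s t) as [Hlo Hhi].
  split.
  - apply (Rmult_le_reg_l (6 * g)); [lra |].
    rewrite <- Rmult_assoc, Rinv_r, Rmult_1_l by lra.
    assert (a ^ 2 * (s ^ 2 + t ^ 2) <= g * (a * b) * (s ^ 2 + t ^ 2))
      by (apply Rmult_le_compat_r; nra).
    assert (g * (a * b * ((s ^ 2 + t ^ 2) / 6)) <= g * (a * b * sq_mean s t))
      by (apply Rmult_le_compat_l; [lra | apply Rmult_le_compat_l; nra]).
    lra.
  - assert (a * b * (s ^ 2 + t ^ 2) <= g * a ^ 2 * (s ^ 2 + t ^ 2))
      by (apply Rmult_le_compat_r; nra).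
    assert (a * b * sq_mean s t <= a * b * ((s ^ 2 + t ^ 2) / 2))
      by (apply Rmult_le_compat_l; nra).
    lra.
Qed.

Lemma regular_sides (K : rect) (g : R) :
  rect_ok K -> h_K K / rho_K K <= g ->
  rx2 K - rx1 K <= g * (ry2 K - ry1 K) /\ ry2 K - ry1 K <= g * (rx2 K - rx1 K).
Proof.
  intros [Hx Hy]; unfold h_K, rho_K.
  set (a := rx2 K - rx1 K); set (b := ry2 K - ry1 K).
  assert (Hmin : 0 < Rmin a b) by (apply Rmin_glb_lt; unfold a, b; lra).
  rewrite Rle_div_l by lra; intros Hh.
  destruct (sqrt_plus_sqr a b) as [Hmax _].
  assert (Ha : a <= sqrt (a ^ 2 + b ^ 2)).
  { eapply Rle_trans, Hmax; eapply Rle_trans, Rmax_l; apply Rle_abs. }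
  assert (Hb : b <= sqrt (a ^ 2 + b ^ 2)).
  { eapply Rle_trans, Hmax; eapply Rle_trans, Rmax_r; apply Rle_abs. }
  assert (Hg : 0 < g).
  { destruct (Rlt_or_le 0 g) as [Hg | Hg]; [exact Hg |].
    pose proof (Rmult_le_compat_r _ _ _ (Rlt_le _ _ Hmin) Hg).
    assert (0 < a) by (unfold a; lra).
    lra. }
  pose proof (Rmult_le_compat_l g _ _ (Rlt_le _ _ Hg) (Rmin_l a b)).
  pose proof (Rmult_le_compat_l g _ _ (Rlt_le _ _ Hg) (Rmin_r a b)).
  split; lra.
Qed.

Lemma element_bounds (K : rect) (p : Q1) (g : R) (w : R -> R -> R) :
  rect_ok K -> h_K K / rho_K K <= g ->
  (forall x y, in_rect K x y -> w x y = q1 p x y) ->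
  / (6 * g) * semi1hK K w <= semi1K K (q1 p) /\
  semi1K K (q1 p) <= g / 2 * semi1hK K w.
Proof.
  intros HK Hreg Hw.
  destruct (regular_sides K g HK Hreg) as [Hab Hba].
  rewrite (semi1hK_q1 K p w HK Hw), semi1K_q1.
  destruct HK as [Hx Hy].
  destruct (edge_energy_bounds g (rx2 K - rx1 K) (ry2 K - ry1 K)
              (dx_q1 p (ry1 K)) (dx_q1 p (ry2 K))) as [Hx1 Hx2]; [lra .. |].
  destruct (edge_energy_bounds g (ry2 K - ry1 K) (rx2 K - rx1 K)
              (dy_q1 p (rx1 K)) (dy_q1 p (rx2 K))) as [Hy1 Hy2]; [lra .. |].
  split; lra.
Qed.

Lemma sumT_le (T : list rect) (f g : rect -> R) :
  (forall K, In K T -> f K <= g K) -> sumT T f <= sumT T g.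
Proof.
  unfold sumT; induction T as [| K T IH]; intros Hfg; simpl; [lra |].
  apply Rplus_le_compat; [apply Hfg; left | apply IH; intros; apply Hfg; right]; auto.
Qed.

Lemma Rmult_sumT (T : list rect) (c : R) (f : rect -> R) :
  c * sumT T f = sumT T (fun K => c * f K).
Proof. unfold sumT; induction T as [| K T IH]; simpl; [ring | rewrite <- IH; ring]. Qed.

Theorem lemma4p1 (Om : rect) (T : list rect) (gamma : R) (w : R -> R -> R) :
  rect_ok Om ->
  conforming_partition Om T ->
  regular gamma T ->
  in_Uh Om T w ->
  (forall K (p : Q1), In K T -> (forall x y, in_rect K x y -> w x y = q1 p x y) ->
     / (6 * gamma) * semi1hK K w <= semi1K K (q1 p) /\
     semi1K K (q1 p) <= gamma / 2 * semi1hK K w) /\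
  (forall rep : rect -> Q1,
     (forall K, In K T -> forall x y, in_rect K x y -> w x y = q1 (rep K) x y) ->
     / (6 * gamma) * sumT T (fun K => semi1hK K w)
       <= sumT T (fun K => semi1K K (q1 (rep K))) /\
     sumT T (fun K => semi1K K (q1 (rep K)))
       <= gamma / 2 * sumT T (fun K => semi1hK K w)).
Proof.
  intros _ [_ [HT _]] Hreg _.
  assert (local : forall K p, In K T -> (forall x y, in_rect K x y -> w x y = q1 p x y) ->
     / (6 * gamma) * semi1hK K w <= semi1K K (q1 p) /\
     semi1K K (q1 p) <= gamma / 2 * semi1hK K w).
  { intros K p HK; apply element_bounds; [apply (HT K HK) | apply (Hreg K HK)]. }
  split; [exact local |].
  intros rep Hrep; rewrite !Rmult_sumT.
  split; apply sumT_le; intros K HK; apply (local K (rep K) HK (Hrep K HK)).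
Qed.
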